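(* Let $v$ be as defined below, and on the arc $\Gamma_1=\{Q=1,\ x_0>1,\ \theta=0\}$ (parametrised by $x_0\in(1,\infty)$) regard $f=p^6/18$ as a function of $v\in(0,\infty)$. Then $f''(v)>0$, i.e. $f$ is strictly convex as a function of $v$; indeed $f'(v)=H/v$ and $\frac{d}{dx_0}(H/v)=\frac{p^2}{v}(p^2-x_0)>0$.
   Context: On $\mathbb R^3$: $r^2=x_1^2+x_2^2$, $Q=x_0^2-\tfrac12r^2$, $H=x_0r^2$, $p=(4x_0^2+r^2)^{1/4}$. On the arc with $Q=1$, $x_0>1$, we have $r^2=2(x_0^2-1)$. $v\colon(1,\infty)\to(0,\infty)$ is a positive solution of $\frac{dv}{dx_0}=\frac{\sqrt{3x_0^2-1}}{\sqrt2(x_0^2-1)}v$, extended by $v(1)=0$ (so $v$ is increasing with $\frac{dv}{dx_0}=\frac{p^2}{r^2}v$). *)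

From Stdlib Require Import Reals.
From Coquelicot Require Import Coquelicot.
Open Scope R_scope.

Definition rsq (x1 x2 : R) : R := x1 ^ 2 + x2 ^ 2.
Definition Qf (x0 x1 x2 : R) : R := x0 ^ 2 - / 2 * rsq x1 x2.
Definition Hf (x0 x1 x2 : R) : R := x0 * rsq x1 x2.
Definition pf (x0 x1 x2 : R) : R := Rpower (4 * x0 ^ 2 + rsq x1 x2) (/ 4).

(* The arc Gamma_1 = {Q = 1, x0 > 1, theta = 0}, parametrised by x0 > 1:
   the point (x0, r, 0) with r = sqrt (2 (x0^2 - 1)) >= 0 (angle theta = 0). *)
Definition g1 (x0 : R) : R := sqrt (2 * (x0 ^ 2 - 1)).

Definition p_arc (x0 : R) : R := pf x0 (g1 x0) 0.
Definition H_arc (x0 : R) : R := Hf x0 (g1 x0) 0.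
Definition f_arc (x0 : R) : R := p_arc x0 ^ 6 / 18.

(* On the arc, r^2 = 2 (x0^2 - 1) and p^2 = sqrt (6 x0^2 - 2), so the ODE for v reads
   v' = (p^2 / r^2) v.  Differentiating in x0 gives df/dx0 = x0 p^2 = (H / r^2) p^2, hence
   df/dv = (df/dx0) / (dv/dx0) = H / v.  Differentiating H / v in x0 with the same ODE gives
   (p^2 / v) (p^2 - x0), positive because p^4 - x0^2 = 5 x0^2 - 2 > 0.  Since v is strictly
   increasing it is locally invertible with differentiable inverse, so derivatives in x0
   transfer to derivatives in v by the chain rule, and f''(v) = (d(H/v)/dx0) / (dv/dx0) > 0. *)
From Stdlib Require Import Reals Ranalysis5 Lra ClassicalEpsilon.
From Coquelicot Require Import Coquelicot.
Open Scope R_scope.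

Lemma locally_between (a b y : R) : a < y < b -> locally y (fun t => a < t < b).
Proof.
  intros [hay hyb].
  assert (he : 0 < Rmin (y - a) (b - y)) by (apply Rmin_pos; lra).
  exists (mkposreal _ he). intros t ht.
  change (Rabs (t - y) < Rmin (y - a) (b - y)) in ht.
  apply Rabs_lt_between' in ht.
  pose proof (Rmin_l (y - a) (b - y)). pose proof (Rmin_r (y - a) (b - y)). lra.
Qed.

Section IncreasingReparametrisation.

Variables (v v' : R -> R) (a b : R).
Hypothesis hab : a < b.
Hypothesis hv : forall x, a <= x <= b -> is_derive v x (v' x).
Hypothesis hv'_pos : forall x, a <= x <= b -> 0 < v' x.

Lemma increasing_of_pos_derive x y : a <= x -> x < y -> y <= b -> v x < v y.
Proof.
  intros hx hxy hy.
  apply (incr_function_le v (Finite a) (Finite b) v'); simpl; try assumption.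
  - intros t h1 h2. apply hv; auto.
  - intros t h1 h2. apply hv'_pos; auto.
Qed.

Lemma inverse_on_interval : exists g : R -> R,
  (forall y, v a <= y <= v b -> a <= g y <= b /\ v (g y) = y) /\
  (forall x, a <= x <= b -> g (v x) = x).
Proof.
  assert (cont : forall x, a <= x <= b -> continuity_pt v x).
  { intros x hx. apply derivable_continuous_pt.
    exists (v' x). apply is_derive_Reals. auto. }
  assert (ex : forall y, exists x, v a <= y <= v b -> a <= x <= b /\ v x = y).
  { intros y. destruct (Rle_dec (v a) y) as [h1|h1].
    - destruct (Rle_dec y (v b)) as [h2|h2].
      + destruct (f_interv_is_interv v a b y hab (conj h1 h2) cont) as [x hx].
        exists x. auto.
      + exists a. intros; lra.
    - exists a. intros; lra. }
  set (g := fun y => proj1_sig (constructive_indefinite_description _ (ex y))).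
  assert (hg : forall y, v a <= y <= v b -> a <= g y <= b /\ v (g y) = y).
  { intros y. unfold g. destruct (constructive_indefinite_description _ (ex y)). simpl. auto. }
  exists g. split; [exact hg |].
  intros x hx.
  assert (hvx : v a <= v x <= v b).
  { split; destruct (Req_dec x a); destruct (Req_dec x b); subst; try lra;
      apply Rlt_le; apply increasing_of_pos_derive; lra. }
  destruct (hg _ hvx) as [hgx hvgx].
  destruct (Rtotal_order (g (v x)) x) as [h|[h|h]]; auto.
  - pose proof (increasing_of_pos_derive _ _ (proj1 hgx) h (proj2 hx)). lra.
  - pose proof (increasing_of_pos_derive _ _ (proj1 hx) h (proj2 hgx)). lra.
Qed.

Lemma local_inverse : exists g : R -> R,
  (forall y, v a <= y <= v b -> a <= g y <= b /\ v (g y) = y) /\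
  (forall x, a <= x <= b -> g (v x) = x) /\
  (forall y, v a < y < v b -> is_derive g y (1 / v' (g y))).
Proof.
  destruct inverse_on_interval as [g [hg hgv]].
  exists g. split; [exact hg | split; [exact hgv |]].
  intros y hy.
  assert (hvab : v a < v b) by (apply increasing_of_pos_derive; lra).
  assert (gcont : continuity_pt g y).
  { apply (continuity_pt_recip_interv v g a b hab increasing_of_pos_derive).
    - intros t h1 h2. unfold comp, id. apply hg; lra.
    - intros t h1 h2. apply hg; lra.
    - intros x hx. apply derivable_continuous_pt.
      exists (v' x). apply is_derive_Reals. auto.
    - exact hy. }
  assert (hder : forall t, g (v a) <= t <= g (v b) -> derivable_pt v t).
  { intros t ht. rewrite !hgv in ht by lra.
    exists (v' t). apply is_derive_Reals. auto. }
  assert (hgy : g (v a) <= g y <= g (v b)).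
  { rewrite !hgv by lra. apply hg; lra. }
  pose proof (derivable_pt_lim_recip_interv v g (v a) (v b) y hder gcont hvab hy hgy) as H.
  assert (hv'gy : derive_pt v (g y) (hder (g y) hgy) = v' (g y)).
  { apply derive_pt_eq_0. apply is_derive_Reals. apply hv. apply hg; lra. }
  rewrite hv'gy in H.
  apply is_derive_Reals. apply H.
  - intros t ht. unfold comp, id. apply hg; auto.
  - assert (0 < v' (g y)) by (apply hv'_pos; apply hg; lra). lra.
Qed.

End IncreasingReparametrisation.

Lemma is_derive_reparam (v v' f f' F : R -> R) (a b x : R) :
  a < x < b ->
  (forall t, a < t < b -> is_derive v t (v' t)) ->
  (forall t, a < t < b -> 0 < v' t) ->
  (forall t, a < t < b -> is_derive f t (f' t)) ->
  (forall t, a < t < b -> F (v t) = f t) ->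
  is_derive F (v x) (f' x / v' x).
Proof.
  intros hx hv hv'_pos hf hF.
  set (a' := (a + x) / 2). set (b' := (x + b) / 2).
  assert (hv_in : forall t, a' <= t <= b' -> is_derive v t (v' t))
    by (intros t ht; apply hv; unfold a', b' in ht; lra).
  assert (hv'_in : forall t, a' <= t <= b' -> 0 < v' t)
    by (intros t ht; apply hv'_pos; unfold a', b' in ht; lra).
  assert (hab' : a' < b') by (unfold a', b'; lra).
  assert (hx' : a' < x < b') by (unfold a', b'; lra).
  destruct (local_inverse v v' a' b' hab' hv_in hv'_in) as [g [hg [hgv hg']]].
  assert (hvx : v a' < v x < v b').
  { split; apply (increasing_of_pos_derive v v' a' b'); auto; lra. }
  assert (hgx : g (v x) = x) by (apply hgv; lra).
  apply (is_derive_ext_loc (fun y => f (g y))).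
  - generalize (locally_between _ _ _ hvx). apply filter_imp. intros y hy.
    destruct (hg y ltac:(lra)) as [hgy hvgy].
    rewrite <- hvgy at 2. symmetry. apply hF. unfold a', b' in hgy. lra.
  - pose proof (hg' (v x) hvx) as hgd. rewrite hgx in hgd.
    pose proof (is_derive_comp f g (v x) _ _
                  ltac:(rewrite hgx; apply hf; lra) hgd) as D.
    unfold scal in D; simpl in D; unfold mult in D; simpl in D.
    replace (f' x / v' x) with (1 / v' x * f' x); [exact D |].
    field. pose proof (hv'_pos x ltac:(lra)). lra.
Qed.

Definition p_sq (x : R) : R := sqrt (6 * x ^ 2 - 2).

Definition ode_rate (x : R) : R := sqrt (3 * x ^ 2 - 1) / (sqrt 2 * (x ^ 2 - 1)).

Lemma g1_sq x : 1 < x -> g1 x ^ 2 = 2 * (x ^ 2 - 1).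
Proof. intros h. unfold g1. rewrite <- Rsqr_pow2. apply Rsqr_sqrt. nra. Qed.

Lemma p_sq_pos x : 1 < x -> 0 < p_sq x.
Proof. intros h. unfold p_sq. apply sqrt_lt_R0. nra. Qed.

Lemma p_sq_sq x : 1 < x -> p_sq x ^ 2 = 6 * x ^ 2 - 2.
Proof. intros h. unfold p_sq. rewrite <- Rsqr_pow2. apply Rsqr_sqrt. nra. Qed.

Lemma p_arc_sq x : 1 < x -> p_arc x ^ 2 = p_sq x.
Proof.
  intros h. unfold p_arc, pf, rsq, p_sq. rewrite g1_sq by lra.
  replace (4 * x ^ 2 + (2 * (x ^ 2 - 1) + 0 ^ 2)) with (6 * x ^ 2 - 2) by ring.
  assert (hp : 0 < 6 * x ^ 2 - 2) by nra.
  rewrite <- Rpower_pow by (unfold Rpower; apply exp_pos).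
  rewrite Rpower_mult. simpl INR. rewrite <- Rpower_sqrt by exact hp.
  f_equal. field.
Qed.

Lemma H_arc_eq x : 1 < x -> H_arc x = 2 * x * (x ^ 2 - 1).
Proof. intros h. unfold H_arc, Hf, rsq. rewrite g1_sq by lra. ring. Qed.

Lemma f_arc_eq x : 1 < x -> f_arc x = p_sq x ^ 3 / 18.
Proof.
  intros h. unfold f_arc. replace (p_arc x ^ 6) with ((p_arc x ^ 2) ^ 3) by ring.
  rewrite p_arc_sq by lra. reflexivity.
Qed.

(* [ode_rate] is the rate p^2 / r^2 of the ODE for v, as r^2 = 2 (x0^2 - 1) on the arc. *)
Lemma ode_rate_eq x : 1 < x -> ode_rate x = p_sq x / (2 * (x ^ 2 - 1)).
Proof.
  intros h. unfold ode_rate, p_sq.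
  replace (6 * x ^ 2 - 2) with (2 * (3 * x ^ 2 - 1)) by ring.
  rewrite sqrt_mult by (lra || nra).
  assert (0 < sqrt 2) by (apply sqrt_lt_R0; lra).
  field_simplify_eq; [| nra].
  rewrite <- (Rsqr_pow2 (sqrt 2)), Rsqr_sqrt by lra. ring.
Qed.

Lemma ode_rate_pos x : 1 < x -> 0 < ode_rate x.
Proof.
  intros h. rewrite ode_rate_eq by exact h. pose proof (p_sq_pos x h).
  apply Rdiv_lt_0_compat; nra.
Qed.

Lemma is_derive_p_sq x : 1 < x -> is_derive p_sq x (6 * x / p_sq x).
Proof.
  intros h. unfold p_sq. auto_derive.
  - nra.
  - replace (6 * (x * (x * 1)) + - (2)) with (6 * x ^ 2 - 2) by ring.
    field. apply Rgt_not_eq. apply sqrt_lt_R0. nra.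
Qed.

Lemma is_derive_f_arc x : 1 < x -> is_derive f_arc x (x * p_sq x).
Proof.
  intros h. apply (is_derive_ext_loc (fun t => / 18 * p_sq t ^ 3)).
  - generalize (locally_between 1 (x + 1) x ltac:(lra)). apply filter_imp.
    intros t ht; cbv beta. rewrite f_arc_eq by lra. apply Rmult_comm.
  - pose proof (p_sq_pos x h).
    replace (x * p_sq x)
      with (/ 18 * (INR 3 * (6 * x / p_sq x) * p_sq x ^ Init.Nat.pred 3)).
    + apply is_derive_scal. apply is_derive_pow. apply is_derive_p_sq, h.
    + simpl. field. lra.
Qed.

Section ArcInV.

Variable v : R -> R.
Hypothesis hv_pos : forall x, 1 < x -> 0 < v x.
Hypothesis hv_ode : forall x, 1 < x -> is_derive v x (ode_rate x * v x).

Lemma dv_pos x : 1 < x -> 0 < ode_rate x * v x.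
Proof. intros h. apply Rmult_lt_0_compat; [apply ode_rate_pos | apply hv_pos]; exact h. Qed.

Lemma is_derive_H_over_v x : 1 < x ->
  is_derive (fun y => H_arc y / v y) x (p_sq x / v x * (p_sq x - x)).
Proof.
  intros h.
  apply (is_derive_ext_loc (fun y => 2 * y * (y ^ 2 - 1) / v y)).
  - generalize (locally_between 1 (x + 1) x ltac:(lra)). apply filter_imp.
    intros t ht. rewrite H_arc_eq by lra. reflexivity.
  - pose proof (hv_pos x h). pose proof (p_sq_pos x h). pose proof (p_sq_sq x h).
    assert (hH : is_derive (fun y => 2 * y * (y ^ 2 - 1)) x (6 * x ^ 2 - 2))
      by (auto_derive; [exact I | ring]).
    pose proof (is_derive_div _ _ x _ _ hH (hv_ode x h) ltac:(lra)) as D.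
    rewrite ode_rate_eq in D by exact h.
    replace (p_sq x / v x * (p_sq x - x)) with
      (((6 * x ^ 2 - 2) * v x
        - 2 * x * (x ^ 2 - 1) * (p_sq x / (2 * (x ^ 2 - 1)) * v x)) / v x ^ 2);
      [exact D |].
    rewrite <- H1. field. split; nra.
Qed.

Lemma H_over_v_deriv_pos x : 1 < x -> 0 < p_sq x / v x * (p_sq x - x).
Proof.
  intros h. pose proof (hv_pos x h). pose proof (p_sq_pos x h). pose proof (p_sq_sq x h).
  apply Rmult_lt_0_compat; [apply Rdiv_lt_0_compat; auto | nra].
Qed.

Variable F : R -> R.
Hypothesis hF : forall x, 1 < x -> F (v x) = f_arc x.

Lemma is_derive_F x : 1 < x -> is_derive F (v x) (H_arc x / v x).
Proof.
  intros h.
  replace (H_arc x / v x) with (x * p_sq x / (ode_rate x * v x)).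
  - apply (is_derive_reparam v (fun t => ode_rate t * v t) f_arc (fun t => t * p_sq t)
             F 1 (x + 1) x); try lra.
    + intros t ht. apply hv_ode. lra.
    + intros t ht. apply dv_pos. lra.
    + intros t ht. apply is_derive_f_arc. lra.
    + intros t ht. apply hF. lra.
  - rewrite ode_rate_eq, H_arc_eq by exact h.
    pose proof (p_sq_pos x h). pose proof (hv_pos x h).
    field. repeat split; nra.
Qed.

Lemma is_derive_2_F x : 1 < x ->
  is_derive_n F 2 (v x) (p_sq x / v x * (p_sq x - x) / (ode_rate x * v x)).
Proof.
  intros h. simpl.
  apply (is_derive_reparam v (fun t => ode_rate t * v t) (fun t => H_arc t / v t)
           (fun t => p_sq t / v t * (p_sq t - t)) (Derive F) 1 (x + 1) x); try lra.
  - intros t ht. apply hv_ode. lra.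
  - intros t ht. apply dv_pos. lra.
  - intros t ht. apply is_derive_H_over_v. lra.
  - intros t ht. apply is_derive_unique, is_derive_F. lra.
Qed.

End ArcInV.

Theorem mainTheorem9
  (v : R -> R)
  (hv_pos : forall x0, 1 < x0 -> 0 < v x0)
  (hv_1 : v 1 = 0)
  (hv_ode : forall x0, 1 < x0 ->
     is_derive v x0 (sqrt (3 * x0 ^ 2 - 1) / (sqrt 2 * (x0 ^ 2 - 1)) * v x0))
  (F : R -> R)
  (hF : forall x0, 1 < x0 -> F (v x0) = f_arc x0) :
  forall x0, 1 < x0 ->
    is_derive F (v x0) (H_arc x0 / v x0) /\
    is_derive (fun y => H_arc y / v y) x0
      (p_arc x0 ^ 2 / v x0 * (p_arc x0 ^ 2 - x0)) /\
    0 < p_arc x0 ^ 2 / v x0 * (p_arc x0 ^ 2 - x0) /\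
    (exists d2 : R, is_derive_n F 2 (v x0) d2 /\ 0 < d2).
Proof.
  intros x h. rewrite p_arc_sq by exact h.
  split; [| split; [| split]].
  - exact (is_derive_F v hv_pos hv_ode F hF x h).
  - exact (is_derive_H_over_v v hv_pos hv_ode x h).
  - exact (H_over_v_deriv_pos v hv_pos x h).
  - eexists; split.
    + exact (is_derive_2_F v hv_pos hv_ode F hF x h).
    + apply Rdiv_lt_0_compat; [apply H_over_v_deriv_pos | apply dv_pos]; assumption.
Qed.
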